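(* Let $n\ge2$ and let $\Sigma=\mathbb{R}^n\subset\mathbb{R}^{n+1}$ be a hyperplane through the origin, $r=|\vec x|$. Define $$f_1(r)=-1+\sum_{m=1}^\infty\frac{m\,(2m-2)!}{2^{3m-1}(m!)^2\prod_{j=0}^{m-1}(n+2j)}\,r^{2m},$$ which has a unique positive root $r_1$. Then $f_1$ satisfies $Lf_1=0$ on $\Sigma$ and is a positive Jacobi function on $\{r>r_1\}$, but $f_1$ is not an eigenfunction on $\{r>r_1\}$; indeed $\int_{\{r>r_1\}}f_1^2e^{-r^2/4}\,d\mu=\infty$.
   Context: Stability operator on a self-shrinker: $Lf=\Delta f-\tfrac12\langle\vec x,\nabla f\rangle+(|A|^2+\tfrac12)f$ (on a hyperplane $|A|^2=0$). A Jacobi function is a function $u$ with $Lu=0$. An eigenfunction on a region $\Omega$ is a $u\not\equiv0$ in $L^2(\Omega,e^{-|\vec x|^2/4}d\mu)$ with $Lu=-\lambda u$ for some constant $\lambda$. *)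

From Stdlib Require Import Reals Lra Lia Arith ClassicalEpsilon.
Open Scope R_scope.

(* Points of R^n are represented as x : nat -> R; only the coordinates
   x 0, ..., x (n-1) are used (coordinates >= n are ignored). *)

Fixpoint rsum (k : nat) (f : nat -> R) : R :=
  match k with O => 0 | S k' => rsum k' f + f k' end.

Definition rnorm (n : nat) (x : nat -> R) : R := sqrt (rsum n (fun i => x i ^ 2)).

Definition upd (x : nat -> R) (i : nat) (t : R) : nat -> R :=
  fun j => if Nat.eqb j i then t else x j.

Fixpoint prodn (n m : nat) : R :=
  match m with O => 1 | S m' => prodn n m' * (INR n + 2 * INR m') end.

Definition coef (n m : nat) : R :=
  INR m * INR (Factorial.fact (2 * m - 2)) /
  (2 ^ (3 * m - 1) * (INR (Factorial.fact m)) ^ 2 * prodn n m).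

(* k-th term of the series (k = 0 corresponds to m = 1) *)
Definition f1_term (n : nat) (r : R) (k : nat) : R :=
  coef n (S k) * r ^ (2 * S k).

(* value of a convergent series (chosen classically; meaningful when it converges) *)
Definition series_sum (u : nat -> R) : R :=
  epsilon (inhabits 0) (fun l => infinite_sum u l).

Definition f1 (n : nat) (r : R) : R := -1 + series_sum (f1_term n r).

Definition F1 (n : nat) (x : nat -> R) : R := f1 n (rnorm n x).

(* L_at n u x v :  u is (pure-second-order) twice differentiable at x and
   (L u)(x) = Δu(x) - 1/2 <x, ∇u(x)> + 1/2 u(x) = v. *)
Definition L_at (n : nat) (u : (nat -> R) -> R) (x : nat -> R) (v : R) : Prop :=
  exists (delta : R) (du : nat -> (nat -> R) -> R) (d2 : nat -> R),
    0 < delta /\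
    (forall i, (i < n)%nat ->
       (forall y, rnorm n (fun j => y j - x j) < delta ->
          derivable_pt_lim (fun t => u (upd y i t)) (y i) (du i y)) /\
       derivable_pt_lim (fun t => du i (upd x i t)) (x i) (d2 i)) /\
    v = rsum n d2 - / 2 * rsum n (fun i => x i * du i x) + / 2 * u x.

(* IInt k g R x v : the iterated Riemann integral of g over the box [-R,R]^k
   in the coordinates 0..k-1 (the other coordinates fixed as in x) exists and
   equals v. *)
Fixpoint IInt (k : nat) (g : (nat -> R) -> R) (R0 : R) (x : nat -> R) (v : R) : Prop :=
  match k with
  | O => v = g x
  | S k' => exists h : R -> R,
      (forall t, IInt k' g R0 (upd x k' t) (h t)) /\
      exists pr : Riemann_integrable h (- R0) R0, RiemannInt pr = v
  end.

Definition ind (Omega : (nat -> R) -> Prop) (x : nat -> R) : R :=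
  if excluded_middle_informative (Omega x) then 1 else 0.

Definition wsq (n : nat) (Omega : (nat -> R) -> Prop) (u : (nat -> R) -> R)
  (x : nat -> R) : R :=
  u x ^ 2 * exp (- (rnorm n x) ^ 2 / 4) * ind Omega x.

(* u in L^2(Omega, e^{-|x|^2/4} dmu): the integrals of u^2 e^{-|x|^2/4} over
   Omega ∩ [-R,R]^n exist and are uniformly bounded (their supremum is the
   integral over Omega). *)
Definition L2w (n : nat) (Omega : (nat -> R) -> Prop) (u : (nat -> R) -> R) : Prop :=
  (forall R0, 0 < R0 -> exists v, IInt n (wsq n Omega u) R0 (fun _ => 0) v) /\
  exists M, forall R0 v, 0 < R0 -> IInt n (wsq n Omega u) R0 (fun _ => 0) v -> v <= M.

Definition eigenfunction (n : nat) (Omega : (nat -> R) -> Prop) (u : (nat -> R) -> R) : Prop :=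
  (exists x, Omega x /\ u x <> 0) /\ L2w n Omega u /\
  exists lam : R, forall x, Omega x -> L_at n u x (- lam * u x).

Definition jacobi_on (n : nat) (Omega : (nat -> R) -> Prop) (u : (nat -> R) -> R) : Prop :=
  forall x, Omega x -> L_at n u x 0.

(* Write f_1(r) = G(r^2) with G(s) = sum_k a_k s^k, a_0 = -1.  Everything follows from
   the two-term recurrence  a_{k+1} (k+1) (4k + 2n) = (k - 1/2) a_k  (acoef_rec):
   - it makes G entire (d'Alembert), so the series converges and G can be differentiated
     termwise, and it is exactly the ODE  4 s G'' + (2n - s) G' + G/2 = 0  (G_ode);
   - for a radial function u = g(|x|^2) the operator L reduces to
     2n g' + 4 s g'' - s g' + g/2 (L_radial), so L f_1 = 0 everywhere;
   - all a_k with k >= 1 are positive, so G' >= a_1 > 0 on [0, oo): G increases from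
     G(0) = -1 to +oo, giving the unique positive root r1 and f_1 > 0 for r > r1;
   - the weighted integral over {r > r1} is an integral of the radial weight
     (G^+)^2 e^{-s/4}; on the box [-R0, R0]^n the iterated integral IInt is computed by
     radial_int (IInt_radial) and bounded below on a thin shell near |x|^2 = 8k
     (box_integral_lower).  There the single monomial a_k (8k)^k grows like (18/5)^k
     (monomial_growth, via k! <= (k/2)^k), so the weight grows like (36/25)^k, and the
     box integrals are unbounded.  Hence f_1 is not in the weighted L^2 space, so it is
     not an eigenfunction on {r > r1}. *)

From Pilot Require Import Defs.
From Stdlib Require Import Reals Factorial Lra Lia ClassicalEpsilon FunctionalExtensionality.
From Coquelicot Require Import Coquelicot.
Open Scope R_scope.

(* Coefficients a_k of G(s) = f_1(sqrt s) = sum_k a_k s^k: a_0 = -1 and a_k = coef n k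
   for k >= 1. *)
Definition acoef (n k : nat) : R := match k with O => -1 | S _ => coef n k end.

Lemma INR_fact_pos k : 0 < INR (fact k).
Proof. apply lt_0_INR, lt_O_fact. Qed.

Section Coefficients.
Variable n : nat.
Hypothesis Hn : (1 <= n)%nat.

Lemma INR_n_ge1 : 1 <= INR n.
Proof. apply (le_INR 1); exact Hn. Qed.

Lemma prodn_pos m : 0 < prodn n m.
Proof.
  pose proof INR_n_ge1. induction m as [|m IH]; simpl; [lra|].
  pose proof (pos_INR m). apply Rmult_lt_0_compat; lra.
Qed.

Lemma acoef_pos k : (1 <= k)%nat -> 0 < acoef n k.
Proof.
  intros Hk. destruct k as [|m]; [lia|]. unfold acoef, coef.
  pose proof (INR_fact_pos (2 * S m - 2)). pose proof (INR_fact_pos (S m)).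
  pose proof (prodn_pos (S m)). pose proof (pow_lt 2 (3 * S m - 1) ltac:(lra)).
  assert (0 < INR (S m)) by (apply lt_0_INR; lia).
  apply Rdiv_lt_0_compat; [nra|]. apply Rmult_lt_0_compat; [|lra].
  apply Rmult_lt_0_compat; [lra|]. apply pow_lt; lra.
Qed.

Lemma acoef_neq0 k : acoef n k <> 0.
Proof.
  destruct k as [|m]; [simpl; lra|].
  pose proof (acoef_pos (S m) ltac:(lia)). lra.
Qed.

(* The two-term recurrence  a_{k+1} (k+1) (4k + 2n) = (k - 1/2) a_k, which encodes
   both the ODE satisfied by G and all the growth estimates below. *)
Lemma acoef_rec k :
  acoef n (S k) * INR (S k) * (4 * INR k + 2 * INR n) = (INR k - / 2) * acoef n k.
Proof.
  pose proof INR_n_ge1. destruct k as [|p].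
  - unfold acoef, coef. simpl. field. lra.
  - unfold acoef, coef.
    replace (2 * S (S p) - 2)%nat with (S (S (2 * p))) by lia.
    replace (2 * S p - 2)%nat with (2 * p)%nat by lia.
    replace (3 * S (S p) - 1)%nat with (3 + (3 * S p - 1))%nat by lia.
    rewrite pow_add. cbn [prodn].
    rewrite (fact_simpl (S (2 * p))), (fact_simpl (2 * p)), (fact_simpl (S p)).
    rewrite !mult_INR, !S_INR, mult_INR. simpl (INR 2).
    pose proof (INR_fact_pos (2 * p)). pose proof (INR_fact_pos p).
    pose proof (prodn_pos p). pose proof (pos_INR p).
    pose proof (pow_lt 2 (3 * S p - 1) ltac:(lra)).
    pose proof (INR_fact_pos (S p)). field. repeat split; lra.
Qed.

Lemma acoef_ratio_bound k : Rabs (acoef n (S k) / acoef n k) <= / (INR k + 1).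
Proof.
  pose proof INR_n_ge1. pose proof (pos_INR k). pose proof (acoef_neq0 k).
  pose proof (acoef_rec k) as Hrec. rewrite S_INR in Hrec.
  assert (E : acoef n (S k) / acoef n k
              = (INR k - / 2) / ((INR k + 1) * (4 * INR k + 2 * INR n))).
  { field_simplify_eq; [nra|repeat split; lra]. }
  rewrite E, Rabs_div by nra. rewrite (Rabs_right (_ * _)) by nra.
  apply Rle_trans with ((INR k + 1) / ((INR k + 1) * (INR k + 1))).
  - apply Rmult_le_compat; [apply Rabs_pos| |apply Rabs_le; lra|].
    + apply Rlt_le, Rinv_0_lt_compat; nra.
    + apply Rinv_le_contravar; nra.
  - right. field. lra.
Qed.

Lemma acoef_radius : CV_radius (acoef n) = p_infty.
Proof.
  apply CV_radius_infinite_DAlembert; [apply acoef_neq0|].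
  apply is_lim_seq_le_le with (u := fun _ => 0) (w := fun k => / (INR k + 1)).
  - intros k. split; [apply Rabs_pos|apply acoef_ratio_bound].
  - apply is_lim_seq_const.
  - replace (Finite 0) with (Rbar_inv p_infty) by reflexivity.
    apply is_lim_seq_inv; [|discriminate].
    apply is_lim_seq_ext with (fun k => INR (S k)); [intros; apply S_INR|].
    apply (is_lim_seq_incr_1 INR p_infty), is_lim_seq_INR.
Qed.

End Coefficients.

Definition G (n : nat) : R -> R := PSeries (acoef n).
Definition G1 (n : nat) : R -> R := PSeries (PS_derive (acoef n)).
Definition G2 (n : nat) : R -> R := PSeries (PS_derive (PS_derive (acoef n))).

Lemma series_term_le u l : (forall k, 0 <= u k) -> infinite_sum u l -> forall k, u k <= l.
Proof.
  intros Hpos Hsum k.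
  assert (Hpart : forall m, 0 <= sum_f_R0 u m).
  { induction m; simpl; [apply Hpos|]. specialize (Hpos (S m)). lra. }
  apply Rle_trans with (sum_f_R0 u k).
  - destruct k; simpl; [lra|]. specialize (Hpart k). lra.
  - apply growing_ineq; [|exact Hsum]. intros m; simpl. specialize (Hpos (S m)). lra.
Qed.

Lemma series_sum_eq u l : infinite_sum u l -> series_sum u = l.
Proof.
  intros Hsum. unfold series_sum.
  assert (Hchosen : infinite_sum u (epsilon (inhabits 0) (fun l => infinite_sum u l)))
    by (apply epsilon_spec; exists l; exact Hsum).
  apply is_series_Reals, is_series_unique in Hchosen.
  apply is_series_Reals, is_series_unique in Hsum. congruence.
Qed.

Lemma infinite_radius_inside a x : CV_radius a = p_infty -> ex_pseries a x.
Proof. intros Ha. apply CV_radius_inside. rewrite Ha. exact I. Qed.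

Section PowerSeries.
Variable n : nat.
Hypothesis Hn : (1 <= n)%nat.

Lemma acoef_radius1 : CV_radius (PS_derive (acoef n)) = p_infty.
Proof. rewrite CV_radius_derive. apply acoef_radius, Hn. Qed.

Lemma acoef_radius2 : CV_radius (PS_derive (PS_derive (acoef n))) = p_infty.
Proof. rewrite !CV_radius_derive. apply acoef_radius, Hn. Qed.

Lemma G_derive s : derivable_pt_lim (G n) s (G1 n s).
Proof.
  apply is_derive_Reals, is_derive_PSeries. rewrite (acoef_radius n Hn). exact I.
Qed.

Lemma G1_derive s : derivable_pt_lim (G1 n) s (G2 n s).
Proof. apply is_derive_Reals, is_derive_PSeries. rewrite acoef_radius1. exact I. Qed.

Lemma G_continuous s : continuity_pt (G n) s.
Proof. apply derivable_continuous_pt. exists (G1 n s). apply G_derive. Qed.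

Lemma G_at_0 : G n 0 = -1.
Proof. unfold G. rewrite PSeries_0. reflexivity. Qed.

Lemma f1_series r : infinite_sum (f1_term n r) (G n (r ^ 2) + 1).
Proof.
  apply is_series_Reals.
  pose proof (PSeries_correct (acoef n) (r ^ 2)
                (infinite_radius_inside _ _ (acoef_radius n Hn))) as Hps.
  eapply is_series_ext;
    [|apply (is_series_incr_1 (fun k => scal (pow_n (r ^ 2) k) (acoef n k)))].
  - intros k. unfold f1_term.
    rewrite pow_n_pow, <- pow_mult. apply Rmult_comm.
  - replace (plus (G n (r ^ 2) + 1) _) with (PSeries (acoef n) (r ^ 2)); [exact Hps|].
    unfold plus, scal; simpl; unfold mult, one; simpl. unfold G. ring.
Qed.

Lemma f1_eq_G r : f1 n r = G n (r ^ 2).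
Proof. unfold f1. rewrite (series_sum_eq _ _ (f1_series r)). ring. Qed.

Ltac solve_ex_pseries :=
  lazymatch goal with
  | |- ex_pseries (PS_plus _ _) _ => apply ex_pseries_plus; solve_ex_pseries
  | |- ex_pseries (PS_scal _ _) _ =>
      apply ex_pseries_scal; [exact (Rmult_comm _ _) | solve_ex_pseries]
  | |- ex_pseries (PS_incr_1 _) _ => apply ex_pseries_incr_1; solve_ex_pseries
  | |- _ => assumption
  end.

(* G solves  4 s G'' + (2n - s) G' + G/2 = 0: the coefficient of s^k on the left is
   4(k+1)k a_{k+1} + 2n(k+1) a_{k+1} - k a_k + a_k/2, which vanishes by acoef_rec. *)
Lemma G_ode s : 4 * s * G2 n s + (2 * INR n - s) * G1 n s + G n s / 2 = 0.
Proof.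
  set (b := PS_derive (acoef n)). set (c := PS_derive b).
  pose proof (infinite_radius_inside _ s (acoef_radius n Hn)) as Ea.
  pose proof (infinite_radius_inside _ s acoef_radius1) as Eb.
  pose proof (infinite_radius_inside _ s acoef_radius2) as Ec.
  set (lhs := PS_plus (PS_plus (PS_scal 4 (PS_incr_1 c)) (PS_scal (2 * INR n) b))
                      (PS_plus (PS_scal (-1) (PS_incr_1 b)) (PS_scal (/ 2) (acoef n)))).
  assert (E : PSeries lhs s = 4 * s * G2 n s + (2 * INR n - s) * G1 n s + G n s / 2).
  { unfold lhs. rewrite !PSeries_plus, !PSeries_scal, !PSeries_incr_1;
      [unfold G, G1, G2; fold b c; field | solve_ex_pseries ..]. }
  rewrite <- E, (PSeries_ext lhs (fun _ => 0)); [apply PSeries_const_0|].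
  intros k. pose proof (acoef_rec n Hn k) as Hrec. pose proof (INR_n_ge1 n Hn).
  unfold lhs, c, b, PS_plus, PS_scal, PS_incr_1, PS_derive, plus, scal, zero.
  destruct k as [|p]; cbn -[INR acoef coef]; unfold mult; cbn -[INR acoef coef].
  - change (acoef n 1) with (coef n 1) in *. change (acoef n 0) with (-1) in *.
    simpl INR in *. nra.
  - rewrite !S_INR in Hrec. rewrite !S_INR. lra.
Qed.
End PowerSeries.

Lemma rsum_ext m f g : (forall i, (i < m)%nat -> f i = g i) -> rsum m f = rsum m g.
Proof.
  induction m; intros H; simpl; [reflexivity|].
  rewrite IHm by (intros i Hi; apply H; lia). rewrite H by lia. reflexivity.
Qed.

Lemma rsum_nonneg m f : (forall i, 0 <= f i) -> 0 <= rsum m f.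
Proof. intros H; induction m; simpl; [lra|]. specialize (H m); lra. Qed.

Lemma rsum_affine m c d f : rsum m (fun i => c + d * f i) = INR m * c + d * rsum m f.
Proof. induction m; simpl rsum; [simpl; ring|]. rewrite IHm, S_INR. ring. Qed.

Lemma rsum_change_one m i f g : (i < m)%nat -> (forall j, j <> i -> f j = g j) ->
  rsum m f = rsum m g - g i + f i.
Proof.
  intros Hi Hfg. induction m as [|m IH]; [lia|]. simpl.
  destruct (Nat.eq_dec i m) as [->|Hne].
  - rewrite (rsum_ext m f g) by (intros j Hj; apply Hfg; lia). ring.
  - rewrite IH, (Hfg m) by lia. ring.
Qed.

Lemma upd_same y i t : upd y i t i = t.
Proof. unfold upd. rewrite Nat.eqb_refl. reflexivity. Qed.

Lemma upd_other y i t j : j <> i -> upd y i t j = y j.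
Proof. intros H. unfold upd. apply Nat.eqb_neq in H. rewrite H. reflexivity. Qed.

Definition sqnorm (n : nat) (y : nat -> R) : R := rsum n (fun i => y i ^ 2).

Lemma sqnorm_nonneg n y : 0 <= sqnorm n y.
Proof. apply rsum_nonneg. intros; apply pow2_ge_0. Qed.

Lemma rnorm_sq n y : rnorm n y ^ 2 = sqnorm n y.
Proof. unfold rnorm. rewrite pow2_sqrt; [reflexivity|apply sqnorm_nonneg]. Qed.

Lemma rnorm_nonneg n y : 0 <= rnorm n y.
Proof. apply sqrt_pos. Qed.

Lemma sqnorm_upd n y i t : (i < n)%nat -> sqnorm n (upd y i t) = sqnorm n y - y i ^ 2 + t ^ 2.
Proof.
  intros Hi. unfold sqnorm. rewrite (rsum_change_one n i _ (fun j => y j ^ 2) Hi).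
  - rewrite upd_same. reflexivity.
  - intros j Hj. rewrite upd_other by exact Hj. reflexivity.
Qed.

Lemma derive_shifted_square c t : derivable_pt_lim (fun t => c + t ^ 2) t (2 * t).
Proof. apply is_derive_Reals. auto_derive; [exact I|ring]. Qed.

Section RadialOperator.
Variables (n : nat) (g g1 g2 : R -> R).
Hypothesis Hg : forall s, derivable_pt_lim g s (g1 s).
Hypothesis Hg1 : forall s, derivable_pt_lim g1 s (g2 s).

Lemma radial_partial y i : (i < n)%nat ->
  derivable_pt_lim (fun t => g (sqnorm n (upd y i t))) (y i) (2 * y i * g1 (sqnorm n y)).
Proof.
  intros Hi.
  replace (fun t => g (sqnorm n (upd y i t)))
    with (comp g (fun t => (sqnorm n y - y i ^ 2) + t ^ 2))
    by (apply functional_extensionality; intros t; unfold comp; rewrite sqnorm_upd by exact Hi;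
        reflexivity).
  replace (2 * y i * g1 (sqnorm n y)) with (g1 (sqnorm n y - y i ^ 2 + y i ^ 2) * (2 * y i))
    by (replace (sqnorm n y - y i ^ 2 + y i ^ 2) with (sqnorm n y) by ring; ring).
  apply derivable_pt_lim_comp; [apply derive_shifted_square|apply Hg].
Qed.

Lemma radial_partial2 x i : (i < n)%nat ->
  derivable_pt_lim (fun t => 2 * upd x i t i * g1 (sqnorm n (upd x i t))) (x i)
    (2 * g1 (sqnorm n x) + 4 * x i ^ 2 * g2 (sqnorm n x)).
Proof.
  intros Hi.
  replace (fun t => 2 * upd x i t i * g1 (sqnorm n (upd x i t)))
    with (fun t => (2 * t) * comp g1 (fun t => (sqnorm n x - x i ^ 2) + t ^ 2) t)
    by (apply functional_extensionality; intros t; unfold comp;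
        rewrite upd_same, sqnorm_upd by exact Hi; reflexivity).
  replace (2 * g1 (sqnorm n x) + 4 * x i ^ 2 * g2 (sqnorm n x))
    with (2 * comp g1 (fun t => (sqnorm n x - x i ^ 2) + t ^ 2) (x i) +
          (2 * x i) * (g2 (sqnorm n x - x i ^ 2 + x i ^ 2) * (2 * x i)))
    by (unfold comp; replace (sqnorm n x - x i ^ 2 + x i ^ 2) with (sqnorm n x) by ring; ring).
  apply (derivable_pt_lim_mult (fun t => 2 * t)).
  - apply is_derive_Reals. auto_derive; [exact I|ring].
  - apply derivable_pt_lim_comp; [apply derive_shifted_square|apply Hg1].
Qed.

Lemma L_radial x : let s := sqnorm n x in
  L_at n (fun y => g (sqnorm n y)) x
    (2 * INR n * g1 s + 4 * s * g2 s - s * g1 s + g s / 2).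
Proof.
  intros s.
  exists 1, (fun i y => 2 * y i * g1 (sqnorm n y)),
    (fun i => 2 * g1 s + 4 * x i ^ 2 * g2 s).
  split; [lra|]. split.
  - intros i Hi. split; [intros y _; apply radial_partial, Hi|apply radial_partial2, Hi].
  - cbv beta. fold s.
    rewrite (rsum_ext n _ (fun i => 2 * g1 s + (4 * g2 s) * x i ^ 2)) by (intros; ring).
    rewrite (rsum_ext n (fun i => x i * (2 * x i * g1 s)) (fun i => 0 + (2 * g1 s) * x i ^ 2))
      by (intros; ring).
    rewrite !rsum_affine. fold (sqnorm n x). fold s. field.
Qed.

End RadialOperator.

Lemma F1_radial n : (1 <= n)%nat -> F1 n = fun y => G n (sqnorm n y).
Proof.
  intros Hn. apply functional_extensionality. intros y.
  unfold F1. rewrite f1_eq_G, rnorm_sq by exact Hn. reflexivity.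
Qed.

Lemma F1_jacobi n x : (1 <= n)%nat -> L_at n (F1 n) x 0.
Proof.
  intros Hn. rewrite (F1_radial n Hn).
  pose proof (L_radial n (G n) (G1 n) (G2 n) (G_derive n Hn) (G1_derive n Hn) x) as HL.
  simpl in HL. pose proof (G_ode n Hn (sqnorm n x)) as Hode.
  replace 0 with (2 * INR n * G1 n (sqnorm n x) + 4 * sqnorm n x * G2 n (sqnorm n x)
                  - sqnorm n x * G1 n (sqnorm n x) + G n (sqnorm n x) / 2) by lra.
  exact HL.
Qed.

Lemma pseries_term_le a x k : (forall j, 0 <= a j) -> 0 <= x -> ex_pseries a x ->
  a k * x ^ k <= PSeries a x.
Proof.
  intros Ha Hx Hex.
  assert (Hs : infinite_sum (fun j => a j * x ^ j) (PSeries a x)).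
  { apply is_series_Reals. eapply is_series_ext; [|apply (PSeries_correct _ _ Hex)].
    intros j. rewrite <- pow_n_pow. apply Rmult_comm. }
  apply (series_term_le _ _ (fun j => Rmult_le_pos _ _ (Ha j) (pow_le _ j Hx)) Hs).
Qed.

Section Monotonicity.
Variable n : nat.
Hypothesis Hn : (1 <= n)%nat.

Lemma G_term_le s k : 0 <= s -> acoef n (S k) * s ^ (S k) <= G n s + 1.
Proof.
  intros Hs.
  assert (Hsq : sqrt s ^ 2 = s) by (apply pow2_sqrt, Hs).
  pose proof (f1_series n Hn (sqrt s)) as Hsum. rewrite Hsq in Hsum.
  assert (Hterm : forall j, f1_term n (sqrt s) j = acoef n (S j) * s ^ (S j))
    by (intros j; unfold f1_term; rewrite pow_mult, Hsq; reflexivity).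
  rewrite <- Hterm. apply (series_term_le _ _ ); [|exact Hsum].
  intros j. rewrite Hterm. apply Rmult_le_pos; [apply Rlt_le, acoef_pos; [exact Hn|lia]|].
  apply pow_le, Hs.
Qed.

(* G' >= a_1 > 0 on [0, oo): all coefficients of G' are positive. *)
Lemma G1_lower s : 0 <= s -> acoef n 1 <= G1 n s.
Proof.
  intros Hs.
  assert (Hpos : forall j, 0 <= PS_derive (acoef n) j).
  { intros j. unfold PS_derive. apply Rmult_le_pos; [apply pos_INR|].
    apply Rlt_le, acoef_pos; [exact Hn|lia]. }
  pose proof (pseries_term_le _ s 0 Hpos Hs (infinite_radius_inside _ s (acoef_radius1 n Hn)))
    as Hfirst.
  replace (PS_derive (acoef n) 0 * s ^ 0) with (acoef n 1) in Hfirst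
    by (unfold PS_derive; simpl; ring).
  exact Hfirst.
Qed.

Lemma G_increasing s t : 0 <= s -> s < t -> G n s < G n t.
Proof.
  intros Hs Hst.
  destruct (MVT_cor2 (G n) (G1 n) s t Hst) as [c [Hc Hcst]].
  { intros c _. apply G_derive, Hn. }
  pose proof (acoef_pos n Hn 1 (le_n 1)). pose proof (G1_lower c ltac:(lra)).
  assert (0 < G1 n c * (t - s)) by (apply Rmult_lt_0_compat; lra).
  lra.
Qed.

Lemma G_monotone s t : 0 <= s -> s <= t -> G n s <= G n t.
Proof.
  intros Hs [Hst|<-]; [apply Rlt_le, G_increasing; assumption|apply Rle_refl].
Qed.

(* G(r^2) increases from -1 to +oo, so f_1 has exactly one positive root. *)
Lemma f1_unique_root : exists! r1, 0 < r1 /\ f1 n r1 = 0.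
Proof.
  pose proof (acoef_pos n Hn 1 (le_n 1)) as Ha1.
  set (R1 := 2 / acoef n 1 + 1).
  assert (HR1 : 0 < R1) by (unfold R1; pose proof (Rdiv_lt_0_compat 2 _ Rlt_0_2 Ha1); lra).
  assert (HGR1 : 0 < G n (R1 ^ 2)).
  { pose proof (G_term_le (R1 ^ 2) 0 (pow2_ge_0 R1)) as Ht. rewrite pow_1 in Ht.
    assert (2 <= acoef n 1 * R1 ^ 2).
    { assert (acoef n 1 * R1 = 2 + acoef n 1) by (unfold R1; field; lra). nra. }
    lra. }
  assert (Hcont : continuity (fun r => G n (r ^ 2))).
  { intros r. apply (continuity_pt_comp (fun r => r ^ 2)); [apply derivable_continuous_pt,
      derivable_pt_pow|apply G_continuous, Hn]. }
  destruct (IVT _ 0 R1 Hcont HR1) as [r1 [Hr1 Hroot]].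
  { rewrite pow_i, G_at_0 by lia. lra. }
  { exact HGR1. }
  assert (Hr1pos : 0 < r1).
  { destruct (Req_dec r1 0) as [->|]; [|lra].
    rewrite pow_i, G_at_0 in Hroot by lia. lra. }
  exists r1. split; [split; [exact Hr1pos|rewrite f1_eq_G; assumption]|].
  intros r [Hr Hfr]. rewrite f1_eq_G in Hfr by exact Hn.
  destruct (Rtotal_order (r1 ^ 2) (r ^ 2)) as [Hlt|[Heq|Hgt]].
  - pose proof (G_increasing _ _ (pow2_ge_0 r1) Hlt). lra.
  - simpl in Heq. nra.
  - pose proof (G_increasing _ _ (pow2_ge_0 r) Hgt). lra.
Qed.

Lemma F1_positive r1 x : 0 < r1 -> f1 n r1 = 0 -> r1 < rnorm n x -> 0 < F1 n x.
Proof.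
  intros Hr1 Hroot Hx. unfold F1. rewrite f1_eq_G by exact Hn.
  rewrite f1_eq_G in Hroot by exact Hn. rewrite <- Hroot.
  apply G_increasing; [apply pow2_ge_0|]. simpl; nra.
Qed.
End Monotonicity.

Lemma shifted_square_continuous (f : R -> R) c t :
  (forall z, continuity_pt f z) -> continuity_pt (fun t => f (c + t ^ 2)) t.
Proof.
  intros Hf. apply (continuity_pt_comp (fun t => c + t ^ 2) f); [|apply Hf].
  apply derivable_continuous_pt. exists (2 * t). apply derive_shifted_square.
Qed.

Lemma shifted_square_integrable (f : R -> R) c a b :
  (forall z, continuity_pt f z) -> ex_RInt (fun t => f (c + t ^ 2)) a b.
Proof.
  intros Hf. apply (ex_RInt_continuous (V := R_CompleteNormedModule)). intros z _.
  apply continuity_pt_filterlim, shifted_square_continuous, Hf.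
Qed.

(* c |-> int_{-R0}^{R0} f(c + t^2) dt is continuous: by uniform continuity of f on
   [c - 1, c + 1 + R0^2], the integrand moves uniformly in t when c moves. *)
Lemma param_RInt_continuous (f : R -> R) R0 c :
  (forall z, continuity_pt f z) -> 0 < R0 ->
  continuity_pt (fun c => RInt (fun t => f (c + t ^ 2)) (- R0) R0) c.
Proof.
  intros Hf HR0. unfold continuity_pt, continue_in, limit1_in, limit_in.
  intros eps Heps. set (eta := eps / (2 * (2 * R0 + 1))).
  assert (Heta : 0 < eta) by (unfold eta; apply Rdiv_lt_0_compat; lra).
  destruct (Heine_cor2 (f := f) (a := c - 1) (b := c + 1 + R0 ^ 2) (fun z _ => Hf z)
              (mkposreal _ Heta)) as [[delta Hdelta] Hunif].
  simpl in Hunif.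
  exists (Rmin delta 1). split; [apply Rmin_Rgt_r; lra|].
  intros c' [_ Hc']. change (Rabs (c' - c) < Rmin delta 1) in Hc'.
  change (Rabs (RInt (fun t => f (c' + t ^ 2)) (- R0) R0
                - RInt (fun t => f (c + t ^ 2)) (- R0) R0) < eps).
  assert (Hc1 : Rabs (c' - c) < delta) by (eapply Rlt_le_trans; [apply Hc'|apply Rmin_l]).
  assert (Hc2 : Rabs (c' - c) < 1) by (eapply Rlt_le_trans; [apply Hc'|apply Rmin_r]).
  apply Rabs_lt_between in Hc2.
  pose proof (shifted_square_integrable f c' (- R0) R0 Hf) as E1.
  pose proof (shifted_square_integrable f c (- R0) R0 Hf) as E2.
  pose proof (RInt_minus _ _ _ _ E1 E2) as Hminus.
  change (minus ?u ?v) with (u - v) in Hminus. rewrite <- Hminus.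
  eapply Rle_lt_trans.
  - apply (abs_RInt_le_const _ (- R0) R0 eta); [lra|apply (ex_RInt_minus _ _ _ _ E1 E2)|].
    intros t Ht. change (Rabs (f (c' + t ^ 2) - f (c + t ^ 2)) <= eta).
    left. apply Hunif; [nra|nra|].
    replace (c' + t ^ 2 - (c + t ^ 2)) with (c' - c) by ring. exact Hc1.
  - unfold eta. apply (Rmult_lt_reg_r (2 * (2 * R0 + 1))); [lra|].
    field_simplify; [nra|lra].
Qed.

Lemma RInt_window_lower (f : R -> R) a b c d L :
  a <= c -> c <= d -> d <= b -> (forall x y, ex_RInt f x y) ->
  (forall t, a <= t <= b -> 0 <= f t) -> (forall t, c <= t <= d -> L <= f t) ->
  (d - c) * L <= RInt f a b.
Proof.
  intros Hac Hcd Hdb Hint Hpos Hwin.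
  rewrite <- (RInt_Chasles f a c b), <- (RInt_Chasles f c d b) by apply Hint.
  change (plus (RInt f a c) (plus (RInt f c d) (RInt f d b)))
    with (RInt f a c + (RInt f c d + RInt f d b)).
  assert (0 <= RInt f a c) by (apply RInt_ge_0; [lra|apply Hint|intros; apply Hpos; lra]).
  assert (0 <= RInt f d b) by (apply RInt_ge_0; [lra|apply Hint|intros; apply Hpos; lra]).
  assert ((d - c) * L <= RInt f c d).
  { replace ((d - c) * L) with (RInt (fun _ => L) c d)
      by (rewrite RInt_const; reflexivity).
    apply RInt_le; [lra|apply ex_RInt_const|apply Hint|intros; apply Hwin; lra]. }
  lra.
Qed.

Fixpoint radial_int (p : R -> R) (R0 : R) (k : nat) (c : R) : R :=
  match k with
  | O => p c
  | S k' => RInt (fun t => radial_int p R0 k' (c + t ^ 2)) (- R0) R0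
  end.

Section RadialIntegral.
Variables (p : R -> R) (R0 : R).
Hypothesis Hp : forall c, continuity_pt p c.
Hypothesis Hp_nonneg : forall s, 0 <= p s.
Hypothesis HR0 : 0 < R0.

Lemma radial_int_continuous k c : continuity_pt (radial_int p R0 k) c.
Proof.
  revert c. induction k as [|k IH]; intros c; [apply Hp|].
  apply param_RInt_continuous; [exact IH|exact HR0].
Qed.

Lemma radial_int_integrable k c a b : ex_RInt (fun t => radial_int p R0 k (c + t ^ 2)) a b.
Proof. apply shifted_square_integrable. intros z. apply radial_int_continuous. Qed.

Lemma radial_int_nonneg k c : 0 <= radial_int p R0 k c.
Proof.
  revert c. induction k as [|k IH]; intros c; [apply Hp_nonneg|].
  apply RInt_ge_0; [lra|apply radial_int_integrable|intros; apply IH].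
Qed.

(* If p >= L on [c, c + k], the k-fold integral is at least the volume 2^k of the unit
   cube [-1, 1]^k times L (on that cube, c + |t|^2 stays in [c, c + k]). *)
Lemma radial_int_lower k c L : 1 <= R0 -> 0 <= L ->
  (forall s, c <= s <= c + INR k -> L <= p s) -> 2 ^ k * L <= radial_int p R0 k c.
Proof.
  intros HR1 HL. revert c. induction k as [|k IH]; intros c Hwin.
  - simpl. rewrite Rmult_1_l. apply Hwin. simpl. lra.
  - simpl radial_int.
    replace (2 ^ S k * L) with ((1 - -1) * (2 ^ k * L)) by (simpl; ring).
    apply RInt_window_lower; [lra|lra|lra|apply radial_int_integrable|
                              intros; apply radial_int_nonneg|].
    intros t Ht. apply IH. intros s Hs. apply Hwin. rewrite S_INR. nra.
Qed.

End RadialIntegral.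

(* tailsq n k x = x_k^2 + ... + x_{n-1}^2: the part of |x|^2 not yet integrated out when
   IInt has integrated over the coordinates 0..k-1. *)
Definition tailsq (n k : nat) (x : nat -> R) : R :=
  rsum n (fun i => if Nat.ltb i k then 0 else x i ^ 2).

Lemma tailsq_0 n x : tailsq n 0 x = sqnorm n x.
Proof. reflexivity. Qed.

Lemma tailsq_full n x : tailsq n n x = 0.
Proof.
  unfold tailsq. rewrite (rsum_ext n _ (fun _ => 0)).
  - clear x. induction n as [|m IH]; simpl; [reflexivity|]. rewrite IH. ring.
  - intros i Hi. apply Nat.ltb_lt in Hi. rewrite Hi. reflexivity.
Qed.

Lemma tailsq_upd n k x t : (k < n)%nat -> tailsq n k (upd x k t) = t ^ 2 + tailsq n (S k) x.
Proof.
  intros Hk. unfold tailsq.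
  rewrite (rsum_change_one n k _ (fun i => if Nat.ltb i (S k) then 0 else x i ^ 2) Hk).
  - rewrite Nat.ltb_irrefl, upd_same. replace (Nat.ltb k (S k)) with true
      by (symmetry; apply Nat.ltb_lt; lia). ring.
  - intros j Hj. rewrite upd_other by exact Hj.
    destruct (Nat.ltb_spec j k); destruct (Nat.ltb_spec j (S k)); try reflexivity; lia.
Qed.

Lemma IInt_radial n p R0 g : (forall c, continuity_pt p c) -> 0 < R0 ->
  (forall y, g y = p (sqnorm n y)) ->
  forall k, (k <= n)%nat -> forall x, IInt k g R0 x (radial_int p R0 k (tailsq n k x)).
Proof.
  intros Hp HR0 Hg. induction k as [|k IH]; intros Hk x.
  - simpl. rewrite tailsq_0, Hg. reflexivity.
  - simpl. exists (fun t => radial_int p R0 k (tailsq n k (upd x k t))). split.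
    + intros t. apply IH. lia.
    + assert (Hslice : forall t, radial_int p R0 k (tailsq n k (upd x k t))
                                 = radial_int p R0 k (tailsq n (S k) x + t ^ 2))
        by (intros t; rewrite tailsq_upd by lia; rewrite Rplus_comm; reflexivity).
      assert (Hint : ex_RInt (fun t => radial_int p R0 k (tailsq n k (upd x k t))) (- R0) R0).
      { eapply ex_RInt_ext; [intros t _; symmetry; apply Hslice|].
        apply radial_int_integrable; assumption. }
      exists (ex_RInt_Reals_0 _ _ _ Hint). rewrite <- RInt_Reals.
      apply RInt_ext. intros t _. apply Hslice.
Qed.

(* The weighted integrand of f_1 on {r > r1}, as a function of s = |x|^2:
   (G(s)^+)^2 e^{-s/4}, since G(|x|^2) > 0 exactly when |x| > r1. *)
Definition weight (n : nat) (s : R) : R := Rmax (G n s) 0 ^ 2 * exp (- s / 4).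

Lemma Rmax0_continuous (f : R -> R) x :
  continuity_pt f x -> continuity_pt (fun s => Rmax (f s) 0) x.
Proof.
  intros Hf.
  replace (fun s => Rmax (f s) 0) with (fun s => (f s + Rabs (f s)) / 2).
  - apply continuity_pt_mult; [|apply continuity_pt_const; intros ? ?; reflexivity].
    apply continuity_pt_plus; [exact Hf|].
    apply (continuity_pt_comp f Rabs); [exact Hf|apply Rcontinuity_abs].
  - apply functional_extensionality. intros s. unfold Rmax.
    destruct (Rle_dec (f s) 0); [rewrite Rabs_left1|rewrite Rabs_right]; lra.
Qed.

Lemma weight_nonneg n s : 0 <= weight n s.
Proof. apply Rmult_le_pos; [apply pow2_ge_0|apply Rlt_le, exp_pos]. Qed.

Lemma weight_continuous n s : (1 <= n)%nat -> continuity_pt (weight n) s.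
Proof.
  intros Hn. apply continuity_pt_mult.
  - apply (continuity_pt_comp (fun s => Rmax (G n s) 0) (fun y => y ^ 2)).
    + apply Rmax0_continuous, G_continuous, Hn.
    + apply derivable_continuous_pt, derivable_pt_pow.
  - apply derivable_continuous_pt. exists (exp (- s / 4) * (- / 4)).
    apply is_derive_Reals. auto_derive; [exact I|unfold Rdiv; ring].
Qed.

Lemma wsq_weight n r1 y : (1 <= n)%nat -> 0 < r1 -> f1 n r1 = 0 ->
  wsq n (fun x => r1 < rnorm n x) (F1 n) y = weight n (sqnorm n y).
Proof.
  intros Hn Hr1 Hroot. unfold wsq, weight, Defs.ind.
  rewrite (F1_radial n Hn), rnorm_sq. rewrite f1_eq_G in Hroot by exact Hn.
  pose proof (rnorm_sq n y) as Hsq. pose proof (rnorm_nonneg n y) as Hnn.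
  destruct (excluded_middle_informative (r1 < rnorm n y)) as [Hout|Hin].
  - assert (Hlt : r1 ^ 2 < sqnorm n y) by nra.
    pose proof (G_increasing n Hn _ _ (pow2_ge_0 r1) Hlt).
    rewrite Rmax_left by lra. ring.
  - apply Rnot_lt_le in Hin. assert (Hle : sqnorm n y <= r1 ^ 2) by nra.
    pose proof (G_monotone n Hn _ _ (sqnorm_nonneg n y) Hle).
    rewrite Rmax_right by lra. ring.
Qed.

(* k! <= (k/2)^k for k >= 6: the ratio of consecutive right-hand sides is
   ((k+1)/2) (1 + 1/k)^k >= k + 1 by Bernoulli's inequality. *)
Lemma fact_le_half_pow k : (6 <= k)%nat -> INR (fact k) <= (INR k / 2) ^ k.
Proof.
  induction k as [|k IH]; intros Hk; [lia|].
  destruct (Nat.eq_dec k 5) as [->|Hk5].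
  - change (fact 6) with 720%nat. rewrite INR_IZR_INZ. simpl. lra.
  - specialize (IH ltac:(lia)).
    assert (Hkpos : 0 < INR k) by (apply lt_0_INR; lia).
    assert (Hbern : 2 <= (1 + / INR k) ^ k).
    { pose proof (Rle_pow_lin (/ INR k) k (Rlt_le _ _ (Rinv_0_lt_compat _ Hkpos))) as Hlin.
      rewrite Rinv_r in Hlin by lra. lra. }
    assert (Hsplit : (INR (S k) / 2) ^ k = (INR k / 2) ^ k * (1 + / INR k) ^ k).
    { rewrite <- Rpow_mult_distr. f_equal. rewrite S_INR. field. lra. }
    rewrite fact_simpl, mult_INR, <- tech_pow_Rmult, Hsplit.
    pose proof (pow_le (INR k / 2) k ltac:(lra)). pose proof (pos_INR (S k)).
    assert (INR (fact k) * INR (S k) <= (INR k / 2) ^ k * INR (S k))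
      by (apply Rmult_le_compat_r; lra).
    assert (0 <= INR (S k) * (INR k / 2) ^ k) by (apply Rmult_le_pos; lra).
    assert (INR (S k) * (INR k / 2) ^ k * 2 <= INR (S k) * (INR k / 2) ^ k * (1 + / INR k) ^ k)
      by (apply Rmult_le_compat_l; lra).
    lra.
Qed.

Lemma exp_le_pow9 k : exp (2 * INR k) <= 9 ^ k.
Proof.
  induction k as [|k IH].
  - simpl. rewrite Rmult_0_r, exp_0. lra.
  - rewrite S_INR. replace (2 * (INR k + 1)) with (2 * INR k + 1 + 1) by ring.
    rewrite !exp_plus. simpl.
    pose proof exp_le_3. pose proof (exp_pos 1). pose proof (exp_pos (2 * INR k)).
    assert (exp 1 * exp 1 <= 9) by nra. nra.
Qed.

(* b_k = a_k k! (40/9)^k: by acoef_rec, b_{k+1}/b_k = 40 (k - 1/2) / (9 (4k + 2n)) >= 1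
   from the index K0 n = 5n + 6 on. *)
Definition scaled_coef (n k : nat) : R := acoef n k * INR (fact k) * (40 / 9) ^ k.

Definition K0 (n : nat) : nat := (5 * n + 6)%nat.

Section Growth.
Variable n : nat.
Hypothesis Hn : (1 <= n)%nat.

Lemma scaled_coef_step k : (K0 n <= k)%nat -> scaled_coef n k <= scaled_coef n (S k).
Proof.
  intros Hk. unfold K0 in Hk.
  assert (HkR : 5 * INR n + 6 <= INR k).
  { replace (5 * INR n + 6) with (INR (5 * n + 6)) by (rewrite plus_INR, mult_INR; simpl; ring).
    apply le_INR, Hk. }
  pose proof (acoef_rec n Hn k) as Hrec. pose proof (INR_n_ge1 n Hn).
  pose proof (acoef_pos n Hn k ltac:(lia)). pose proof (INR_fact_pos k).
  pose proof (pow_lt (40 / 9) k ltac:(lra)).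
  assert (Hratio : scaled_coef n (S k) = scaled_coef n k
                     * (40 * (INR k - / 2) / (9 * (4 * INR k + 2 * INR n)))).
  { unfold scaled_coef. rewrite fact_simpl, mult_INR. simpl pow.
    apply (Rmult_eq_reg_r (4 * INR k + 2 * INR n)); [|lra].
    transitivity (acoef n (S k) * INR (S k) * (4 * INR k + 2 * INR n)
                  * (INR (fact k) * (40 / 9) * (40 / 9) ^ k)); [ring|].
    rewrite Hrec. field. lra. }
  assert (Hfactor : 1 <= 40 * (INR k - / 2) / (9 * (4 * INR k + 2 * INR n))).
  { apply (Rmult_le_reg_r (9 * (4 * INR k + 2 * INR n))); [lra|].
    unfold Rdiv. rewrite Rmult_assoc, Rinv_l by lra. lra. }
  assert (0 < scaled_coef n k) by (unfold scaled_coef; apply Rmult_lt_0_compat; [nra|lra]).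
  rewrite Hratio. nra.
Qed.

Lemma scaled_coef_lower k : (K0 n <= k)%nat -> scaled_coef n (K0 n) <= scaled_coef n k.
Proof.
  induction 1 as [|k Hk IH]; [apply Rle_refl|].
  eapply Rle_trans; [exact IH|apply scaled_coef_step, Hk].
Qed.

Lemma scaled_coef_pos : 0 < scaled_coef n (K0 n).
Proof.
  unfold scaled_coef. pose proof (INR_fact_pos (K0 n)).
  pose proof (acoef_pos n Hn (K0 n) ltac:(unfold K0; lia)).
  pose proof (pow_lt (40 / 9) (K0 n) ltac:(lra)).
  apply Rmult_lt_0_compat; [nra|lra].
Qed.

(* Since 8k = (18/5) (40/9) (k/2) and k! <= (k/2)^k, the single monomial a_k s^k at
   s = 8k grows like (18/5)^k. *)
Lemma monomial_growth k : (K0 n <= k)%nat ->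
  scaled_coef n (K0 n) * (18 / 5) ^ k <= acoef n k * (8 * INR k) ^ k.
Proof.
  intros Hk.
  pose proof (scaled_coef_lower k Hk) as Hlow. unfold scaled_coef at 2 in Hlow.
  pose proof (fact_le_half_pow k ltac:(unfold K0 in Hk; lia)) as Hfact.
  assert (Hsplit : (8 * INR k) ^ k = (18 / 5) ^ k * ((INR k / 2) ^ k * (40 / 9) ^ k))
    by (rewrite <- !Rpow_mult_distr; f_equal; field).
  rewrite Hsplit.
  pose proof (pow_lt (40 / 9) k ltac:(lra)). pose proof (pow_lt (18 / 5) k ltac:(lra)).
  pose proof (acoef_pos n Hn k ltac:(unfold K0 in Hk; lia)).
  assert (acoef n k * (INR (fact k) * (40 / 9) ^ k)
            <= acoef n k * ((INR k / 2) ^ k * (40 / 9) ^ k))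
    by (apply Rmult_le_compat_l; [lra|apply Rmult_le_compat_r; lra]).
  nra.
Qed.

(* On the window [8k, 8k + W], once beta (18/5)^k >= 2 (beta = scaled_coef n (K0 n)):
   G >= a_k (8k)^k - 1 >= beta/2 (18/5)^k and e^{-s/4} >= e^{-W/4} 9^{-k}, so the weight
   grows like (36/25)^k. *)
Lemma weight_large k W s : (K0 n <= k)%nat -> 0 <= W ->
  2 <= scaled_coef n (K0 n) * (18 / 5) ^ k -> 8 * INR k <= s <= 8 * INR k + W ->
  (scaled_coef n (K0 n) / 2) ^ 2 * exp (- W / 4) * (36 / 25) ^ k <= weight n s.
Proof.
  intros Hk HW Hbig Hs. set (beta := scaled_coef n (K0 n)) in *.
  set (lowG := beta / 2 * (18 / 5) ^ k).
  assert (Hk0 : 0 <= 8 * INR k) by (pose proof (pos_INR k); lra).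
  assert (HG : lowG <= Rmax (G n s) 0).
  { pose proof (monomial_growth k Hk) as Hmono. fold beta in Hmono.
    destruct k as [|k']; [unfold K0 in Hk; lia|].
    pose proof (G_term_le n Hn (8 * INR (S k')) k' Hk0).
    pose proof (G_monotone n Hn _ _ Hk0 (proj1 Hs)).
    pose proof (Rmax_l (G n s) 0). unfold lowG. lra. }
  assert (HlowG : 0 <= lowG) by (unfold lowG; lra).
  assert (Hexp : exp (- W / 4) * / 9 ^ k <= exp (- s / 4)).
  { apply Rle_trans with (exp (- (8 * INR k + W) / 4)).
    - replace (- (8 * INR k + W) / 4) with (- W / 4 + - (2 * INR k)) by field.
      rewrite exp_plus, exp_Ropp. apply Rmult_le_compat_l; [apply Rlt_le, exp_pos|].
      apply Rinv_le_contravar; [apply exp_pos|apply exp_le_pow9].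
    - destruct (Req_dec s (8 * INR k + W)) as [->|Hne]; [lra|].
      apply Rlt_le, exp_increasing. lra. }
  assert (Hpow : (36 / 25) ^ k = ((18 / 5) ^ k) ^ 2 * / 9 ^ k).
  { rewrite <- pow_mult, Nat.mul_comm, pow_mult, <- pow_inv, <- Rpow_mult_distr.
    f_equal. field. }
  unfold weight. rewrite Hpow.
  replace ((beta / 2) ^ 2 * exp (- W / 4) * (((18 / 5) ^ k) ^ 2 * / 9 ^ k))
    with (lowG ^ 2 * (exp (- W / 4) * / 9 ^ k)) by (unfold lowG; ring).
  apply Rmult_le_compat; [apply pow2_ge_0| |apply pow_incr; lra|exact Hexp].
  apply Rmult_le_pos; [apply Rlt_le, exp_pos|apply Rlt_le, Rinv_0_lt_compat, pow_lt; lra].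
Qed.

End Growth.

(* Lower bound for a radial integral over the box [-(T+1), T+1]^(m+1): integrate the
   first coordinate over [T, T + 1/T] and the other m over [-1, 1]; there
   T^2 <= |t|^2 <= T^2 + m + 3. *)
Lemma box_integral_lower (p : R -> R) m T L :
  (forall c, continuity_pt p c) -> (forall s, 0 <= p s) -> 1 <= T -> 0 <= L ->
  (forall s, T ^ 2 <= s <= T ^ 2 + INR m + 3 -> L <= p s) ->
  / T * (2 ^ m * L) <= radial_int p (T + 1) (S m) 0.
Proof.
  intros Hp Hpos HT HL Hwin. simpl radial_int.
  assert (HinvT : 0 < / T <= 1).
  { split; [apply Rinv_0_lt_compat; lra|].
    rewrite <- Rinv_1. apply Rinv_le_contravar; lra. }
  replace (/ T * (2 ^ m * L)) with ((T + / T - T) * (2 ^ m * L)) by ring.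
  assert (HR0 : 0 < T + 1) by lra.
  apply RInt_window_lower; [lra|lra|lra|apply (radial_int_integrable p _ Hp HR0)
                            |intros; apply (radial_int_nonneg p _ Hp Hpos HR0)|].
  intros t Ht. apply (radial_int_lower p _ Hp Hpos HR0); [lra|exact HL|].
  intros s Hs. apply Hwin.
  assert (Hsq : (T + / T) ^ 2 = T ^ 2 + 2 + / T ^ 2) by (field; lra).
  assert (/ T ^ 2 <= 1) by (rewrite <- pow_inv; simpl; nra).
  assert (t ^ 2 <= (T + / T) ^ 2) by (apply pow_incr; lra).
  assert (T ^ 2 <= t ^ 2) by (apply pow_incr; lra).
  lra.
Qed.

Definition box_const (m : nat) : R :=
  2 ^ m * ((scaled_coef (S m) (K0 (S m)) / 2) ^ 2 * exp (- (INR m + 3) / 4)).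

Lemma box_const_pos m : 0 < box_const m.
Proof.
  unfold box_const. pose proof (scaled_coef_pos (S m) ltac:(lia)).
  pose proof (exp_pos (- (INR m + 3) / 4)). pose proof (pow_lt 2 m Rlt_0_2).
  pose proof (pow_lt (scaled_coef (S m) (K0 (S m)) / 2) 2 ltac:(lra)).
  apply Rmult_lt_0_compat; nra.
Qed.

(* On the box of half-side T + 1 with T^2 = 8k, box_integral_lower and weight_large
   give 2^m (beta/2)^2 e^{-(m+3)/4} (36/25)^k / T >= box_const m * k / 200, using
   (36/25)^k >= (k/5)^2 (Bernoulli) and T <= 8k. *)
Lemma weight_box_integral_lower m k : (K0 (S m) <= k)%nat ->
  2 <= scaled_coef (S m) (K0 (S m)) * (18 / 5) ^ k ->
  box_const m * INR k / 200 <= radial_int (weight (S m)) (sqrt (8 * INR k) + 1) (S m) 0.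
Proof.
  intros HkK Hbig. set (beta := scaled_coef (S m) (K0 (S m))) in *.
  set (T := sqrt (8 * INR k)).
  assert (Hk : 1 <= INR k) by (apply (le_INR 1); unfold K0 in HkK; lia).
  assert (HT2 : T ^ 2 = 8 * INR k) by (apply pow2_sqrt; lra).
  assert (HT1 : 1 <= T) by (rewrite <- sqrt_1; apply sqrt_le_1_alt; lra).
  assert (HTk : T <= 8 * INR k) by nra.
  assert (Hint : / T * (2 ^ m * ((beta / 2) ^ 2 * exp (- (INR m + 3) / 4) * (36 / 25) ^ k))
                 <= radial_int (weight (S m)) (T + 1) (S m) 0).
  { apply box_integral_lower; [intros; apply weight_continuous; lia|apply weight_nonneg|lra| |].
    - apply Rmult_le_pos; [|apply pow_le; lra].
      apply Rmult_le_pos; [apply pow2_ge_0|apply Rlt_le, exp_pos].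
    - intros s Hs. apply weight_large; [lia|exact HkK|pose proof (pos_INR m); lra
                                        |exact Hbig|lra]. }
  assert (Hquad : INR k ^ 2 / 25 <= (36 / 25) ^ k).
  { replace (36 / 25) with ((6 / 5) ^ 2) by field.
    rewrite <- pow_mult, Nat.mul_comm, pow_mult.
    pose proof (Rle_pow_lin (1 / 5) k ltac:(lra)) as Hlin.
    replace (1 + 1 / 5) with (6 / 5) in Hlin by field.
    replace (INR k ^ 2 / 25) with ((INR k / 5) ^ 2) by field.
    apply pow_incr. pose proof (pos_INR k). lra. }
  pose proof (box_const_pos m) as HC.
  eapply Rle_trans; [|exact Hint].
  replace (/ T * (2 ^ m * ((beta / 2) ^ 2 * exp (- (INR m + 3) / 4) * (36 / 25) ^ k)))
    with (box_const m * (36 / 25) ^ k * / T) by (unfold box_const; fold beta; ring).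
  apply Rle_trans with (box_const m * (INR k ^ 2 / 25) * / (8 * INR k)); [right; field; lra|].
  apply Rmult_le_compat.
  - apply Rmult_le_pos; [lra|]. pose proof (pow2_ge_0 (INR k)). lra.
  - apply Rlt_le, Rinv_0_lt_compat. lra.
  - apply Rmult_le_compat_l; lra.
  - apply Rinv_le_contravar; lra.
Qed.

(* The weighted integral of f_1^2 over {r > r1} is unbounded: its box integrals are the
   radial integrals of the weight, which exceed box_const m * k / 200 for large k. *)
Lemma weighted_integral_unbounded n r1 : (1 <= n)%nat -> 0 < r1 -> f1 n r1 = 0 ->
  forall M, exists R0 v, 0 < R0 /\
    IInt n (wsq n (fun x => r1 < rnorm n x) (F1 n)) R0 (fun _ => 0) v /\ M < v.
Proof.
  intros Hn Hr1 Hroot M. destruct n as [|m]; [lia|].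
  set (beta := scaled_coef (S m) (K0 (S m))).
  pose proof (scaled_coef_pos (S m) Hn) as Hbeta. fold beta in Hbeta.
  pose proof (box_const_pos m) as HC.
  destruct (INR_unbounded (200 * M / box_const m)) as [j0 Hj0].
  destruct (INR_unbounded (2 / beta)) as [j1 Hj1].
  set (k := S (Nat.max (K0 (S m)) (Nat.max j0 j1))).
  assert (HkK : (K0 (S m) <= k)%nat) by (unfold k; lia).
  assert (HkM : 200 * M / box_const m < INR k)
    by (apply Rlt_le_trans with (INR j0); [lra|apply le_INR; unfold k; lia]).
  assert (Hkb : 2 / beta < INR k)
    by (apply Rlt_le_trans with (INR j1); [lra|apply le_INR; unfold k; lia]).
  assert (Hbig : 2 <= beta * (18 / 5) ^ k).
  { pose proof (Rle_pow_lin (13 / 5) k ltac:(lra)) as Hlin.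
    replace (1 + 13 / 5) with (18 / 5) in Hlin by field.
    apply (Rmult_lt_compat_l beta) in Hkb; [|exact Hbeta].
    replace (beta * (2 / beta)) with 2 in Hkb by (field; lra).
    pose proof (pos_INR k). nra. }
  exists (sqrt (8 * INR k) + 1),
    (radial_int (weight (S m)) (sqrt (8 * INR k) + 1) (S m) 0).
  split; [pose proof (sqrt_pos (8 * INR k)); lra|]. split.
  - replace (radial_int (weight (S m)) _ (S m) 0)
      with (radial_int (weight (S m)) (sqrt (8 * INR k) + 1) (S m)
              (tailsq (S m) (S m) (fun _ => 0)))
      by (rewrite tailsq_full; reflexivity).
    apply IInt_radial; [intros; apply weight_continuous, Hn
                       |pose proof (sqrt_pos (8 * INR k)); lra| |lia].
    intros y. apply wsq_weight; assumption.
  - pose proof (weight_box_integral_lower m k HkK Hbig) as Hlow.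
    apply (Rmult_lt_compat_l (box_const m)) in HkM; [|exact HC].
    replace (box_const m * (200 * M / box_const m)) with (200 * M) in HkM by (field; lra).
    lra.
Qed.

Theorem lemma4p14 (n : nat) (hn : (2 <= n)%nat) :
  (* the series defining f_1 converges for every r *)
  (forall r, exists l, infinite_sum (f1_term n r) l) /\
  (* f_1 has a unique positive root *)
  (exists! r1, 0 < r1 /\ f1 n r1 = 0) /\
  (* L f_1 = 0 on the whole hyperplane *)
  jacobi_on n (fun _ => True) (F1 n) /\
  forall r1, 0 < r1 -> f1 n r1 = 0 ->
    let Omega := fun x => r1 < rnorm n x in
    (* positive Jacobi function on {r > r1} *)
    (jacobi_on n Omega (F1 n) /\ (forall x, Omega x -> 0 < F1 n x)) /\
    (* not an eigenfunction on {r > r1} *)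
    ~ eigenfunction n Omega (F1 n) /\
    (* int_{r > r1} f_1^2 e^{-r^2/4} dmu = infinity *)
    (forall M, exists R0 v, 0 < R0 /\ IInt n (wsq n Omega (F1 n)) R0 (fun _ => 0) v /\ M < v).
Proof.
  assert (Hn : (1 <= n)%nat) by lia.
  split; [intros r; exists (G n (r ^ 2) + 1); apply f1_series, Hn|].
  split; [apply f1_unique_root, Hn|].
  split; [intros x _; apply F1_jacobi, Hn|].
  intros r1 Hr1 Hroot Omega.
  pose proof (weighted_integral_unbounded n r1 Hn Hr1 Hroot) as Hunbounded.
  split; [split|split].
  - intros x _. apply F1_jacobi, Hn.
  - intros x Hx. apply (F1_positive n Hn r1); assumption.
  - (* an eigenfunction is in the weighted L^2 space, whose box integrals are bounded *)
    intros [_ [[_ [bound Hbound]] _]].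
    destruct (Hunbounded bound) as [R0 [v [HR0 [Hv Hlt]]]].
    specialize (Hbound R0 v HR0 Hv). lra.
  - exact Hunbounded.
Qed.
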